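(* Let $(V,E,c,p)$ be a PCSTP instance with potential terminals $T_p=\{t_1,\dots,t_s\}$ and let $(V',A',T',c',r')$ be the SAP obtained from it by Transformation 1 (see context), with $M=\sum_{t\in T_p}p(t)$. Let $\tilde{\mathcal U}\subseteq\{U\subset V': r'\notin U,\ U\cap T'\neq\emptyset\}$ and consider the LP $$\min\ c'^Tx-M\quad\text{s.t.}\quad x(\delta^-(U))\ge 1\ \ (U\in\tilde{\mathcal U}),\qquad 0\le x(a)\le 1\ \ (a\in A').$$ Let $\tilde L$ be its optimal value, let $\pi\ge0$ be an optimal dual solution for the constraints indexed by $\tilde{\mathcal U}$, and let $\tilde c(a):=c'(a)-\sum_{U\in\tilde{\mathcal U}:\,a\in\delta^-(U)}\pi_U$ be the reduced costs. Let $B$ be an upper bound on the cost $C$ of an optimal solution of the PCSTP instance. Let $t_i\in T_p$ and let $\bar T_i\subseteq T_p$ be such that, for every optimal solution $S$ of the PCSTP instance, $V(S)\cap\bar T_i\neq\emptyset$ implies $t_i\in V(S)$. If $$\sum_{j:\ t_j\in\bar T_i}\tilde c\big((v_0',t_j')\big)+\tilde L> B,$$ then $t_i$ is contained in every optimal solution of the PCSTP instance.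
   Context: A PCSTP instance $(V,E,c,p)$: finite undirected connected graph, $c:E\to\mathbb{Q}_{>0}$, $p:V\to\mathbb{Q}_{\ge0}$; for a tree $S$ (connected acyclic subgraph with at least one vertex) $C(S):=\sum_{e\in E(S)}c(e)+\sum_{v\in V\setminus V(S)}p(v)$; optimal solutions minimize $C$; $T_p:=\{v:p(v)>0\}$. A Steiner arborescence problem (SAP) $(V',A',T',c',r')$: digraph $(V',A')$, costs $c'\ge0$, terminals $T'$, root $r'\in T'$; for $U\subseteq V'$, $\delta^-(U)$ is the set of arcs entering $U$, and $x(F):=\sum_{a\in F}x(a)$. Transformation 1 (PCSTP to SAP): set $V':=V$, $A':=\{(v,w),(w,v):\{v,w\}\in E\}$ with $c'((v,w)):=c(\{v,w\})$; $M:=\sum_{t\in T_p}p(t)$; add new vertices $r'$ and $v_0'$; for each $i=1,\dots,s$: add arc $(r',t_i)$ of cost $M$, add a new vertex $t_i'$, add arcs $(t_i,v_0')$ and $(t_i,t_i')$ of cost $0$, and add arc $(v_0',t_i')$ of cost $p(t_i)$. Terminals $T':=\{t_1',\dots,t_s'\}\cup\{r'\}$, root $r'$. *)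

From HB Require Import structures.
From mathcomp Require Import all_boot all_order all_algebra.
Set Implicit Arguments. Unset Strict Implicit. Unset Printing Implicit Defensive.
Import Order.TTheory GRing.Theory Num.Theory.
Local Open Scope ring_scope.

Record PCSTP (V : finType) := Pcstp {
  adj : rel V;
  cst : V -> V -> rat;
  pr  : V -> rat
}.

Definition pcstp_wf (V : finType) (I : PCSTP V) : Prop :=
  [/\ symmetric (adj I), irreflexive (adj I),
      (forall v w, cst I v w = cst I w v),
      (forall v w, adj I v w -> 0 < cst I v w) &
      (forall v, 0 <= pr I v)] /\
  (forall v w, connect (adj I) v w).

(* A tree S = (VS, ES); ES is a set of ordered pairs closed under reversal,
   each undirected edge {v,w} represented by both (v,w) and (w,v). *)
Definition is_tree (V : finType) (I : PCSTP V) (VS : {set V}) (ES : {set V * V}) : Prop :=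
  [/\ VS != set0,
      (forall a, a \in ES -> [/\ adj I a.1 a.2, a.1 \in VS, a.2 \in VS & (a.2, a.1) \in ES]),
      (forall u v, u \in VS -> v \in VS -> connect (fun x y => (x, y) \in ES) u v) &
      ~ (exists s : seq V, [/\ uniq s, 3 <= size s & cycle (fun x y => (x, y) \in ES) s]%N)].

(* C(S): edge costs (each undirected edge counted once) plus prizes of uncovered vertices *)
Definition tree_cost (V : finType) (I : PCSTP V) (VS : {set V}) (ES : {set V * V}) : rat :=
  (\sum_(a in ES) cst I a.1 a.2) / 2%:R + \sum_(v in ~: VS) pr I v.

Definition is_optimal (V : finType) (I : PCSTP V) (VS : {set V}) (ES : {set V * V}) : Prop :=
  is_tree I VS ES /\
  forall VS' ES', is_tree I VS' ES' -> tree_cost I VS ES <= tree_cost I VS' ES'.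

Definition Tp (V : finType) (I : PCSTP V) := {t : V | 0 < pr I t}.

(* V' = V  +  {t_i' : t_i in T_p}  +  {r', v_0'}   (inr true = r', inr false = v_0') *)
Definition V' (V : finType) (I : PCSTP V) : finType := ((V + Tp I) + bool)%type.

Definition orig (V : finType) (I : PCSTP V) (v : V) : V' I := inl (inl v).
Definition tprime (V : finType) (I : PCSTP V) (t : Tp I) : V' I := inl (inr t).
Definition root' (V : finType) (I : PCSTP V) : V' I := inr true.
Definition v0' (V : finType) (I : PCSTP V) : V' I := inr false.

Definition Mbig (V : finType) (I : PCSTP V) : rat := \sum_(t | 0 < pr I t) pr I t.

Definition arcb (V : finType) (I : PCSTP V) (a b : V' I) : bool :=
  match a, b with
  | inl (inl v), inl (inl w) => adj I v w
  | inr true, inl (inl t) => 0 < pr I t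
  | inl (inl t), inr false => 0 < pr I t
  | inl (inl t), inl (inr t') => t == val t'
  | inr false, inl (inr _) => true
  | _, _ => false
  end.

Definition cst' (V : finType) (I : PCSTP V) (a b : V' I) : rat :=
  match a, b with
  | inl (inl v), inl (inl w) => cst I v w
  | inr true, inl (inl t) => Mbig I
  | inl (inl t), inr false => 0
  | inl (inl t), inl (inr t') => 0
  | inr false, inl (inr t') => pr I (val t')
  | _, _ => 0
  end.

Definition arcs (V : finType) (I : PCSTP V) : {set V' I * V' I} :=
  [set a | arcb a.1 a.2].

Definition terminals' (V : finType) (I : PCSTP V) : {set V' I} :=
  [set x | match x with inl (inr _) => true | inr true => true | _ => false end].

Definition delta_in (V : finType) (I : PCSTP V) (U : {set V' I}) : {set V' I * V' I} :=
  [set a in arcs I | (a.2 \in U) && (a.1 \notin U)].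

Definition lp_feasible (V : finType) (I : PCSTP V) (Ut : {set {set V' I}})
    (x : V' I * V' I -> rat) : Prop :=
  (forall U, U \in Ut -> 1 <= \sum_(a in delta_in U) x a) /\
  (forall a, a \in arcs I -> 0 <= x a <= 1).

Definition lp_obj (V : finType) (I : PCSTP V) (x : V' I * V' I -> rat) : rat :=
  \sum_(a in arcs I) cst' a.1 a.2 * x a - Mbig I.

Definition lp_opt_value (V : finType) (I : PCSTP V) (Ut : {set {set V' I}}) (L : rat) : Prop :=
  (exists x, lp_feasible Ut x /\ lp_obj x = L) /\
  (forall x, lp_feasible Ut x -> L <= lp_obj x).

(* LP dual: pi_U >= 0 for the cut constraints, sigma_a >= 0 for x(a) <= 1 *)
Definition dual_feasible (V : finType) (I : PCSTP V) (Ut : {set {set V' I}})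
    (pi : {set V' I} -> rat) (sigma : V' I * V' I -> rat) : Prop :=
  (forall U, U \in Ut -> 0 <= pi U) /\
  (forall a, a \in arcs I -> 0 <= sigma a /\
     \sum_(U in Ut | a \in delta_in U) pi U - sigma a <= cst' a.1 a.2).

Definition dual_obj (V : finType) (I : PCSTP V) (Ut : {set {set V' I}})
    (pi : {set V' I} -> rat) (sigma : V' I * V' I -> rat) : rat :=
  \sum_(U in Ut) pi U - \sum_(a in arcs I) sigma a - Mbig I.

Definition dual_optimal_pi (V : finType) (I : PCSTP V) (Ut : {set {set V' I}})
    (pi : {set V' I} -> rat) : Prop :=
  exists sigma, dual_feasible Ut pi sigma /\
    forall pi' sigma', dual_feasible Ut pi' sigma' ->
      dual_obj Ut pi' sigma' <= dual_obj Ut pi sigma.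

Definition red_cost (V : finType) (I : PCSTP V) (Ut : {set {set V' I}})
    (pi : {set V' I} -> rat) (a : V' I * V' I) : rat :=
  cst' a.1 a.2 - \sum_(U in Ut | a \in delta_in U) pi U.

(* Suppose an optimal tree [S] avoids [t_i]; then it avoids all of [Tbar].  We
   turn [S] into a feasible solution [x] of the cut LP of the Steiner
   arborescence problem given by Transformation 1: [x] is the indicator of an
   arborescence rooted at [r'] that enters [S] at a vertex [r0] of positive prize
   (one exists in every optimal tree), follows the edges of [S] away from [r0],
   and reaches each [t'] with [t] outside [S] through [r0 -> v0' -> t'].  Its
   objective is at most [C(S) <= B] and it saturates the arcs [(v0', t_j')] for
   [t_j] in [Tbar].  LP duality then gives [sum_j red(v0', t_j') + L <= B],
   contradicting the hypothesis. *)

From HB Require Import structures.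
From mathcomp Require Import all_boot all_order all_algebra.
From mathcomp Require Import ring lra zify.
Set Implicit Arguments. Unset Strict Implicit. Unset Printing Implicit Defensive.
Import Order.TTheory GRing.Theory Num.Theory.
Local Open Scope ring_scope.

Section Farkas.
Variables (R : realFieldType) (X : finType).

Definition affine_val (J : finType) (S : {set X}) (A : J -> X -> R) (b : J -> R)
    (j : J) (x : X -> R) : R :=
  \sum_(i in S) A j i * x i + b j.

Definition in_cone (J : finType) (A : J -> X -> R) (b : J -> R) (a : X -> R) (c : R) :=
  exists lam : J -> R, [/\ forall j, 0 <= lam j,
    forall i, \sum_j lam j * A j i = a i & \sum_j lam j * b j = c].

Lemma sum_kronecker (J : finType) (j : J) (f : J -> R) :
  \sum_k (k == j)%:R * f k = f j.
Proof.
rewrite (bigD1 j) //= eqxx mul1r big1 ?addr0 // => k /negbTE ->.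
by rewrite mul0r.
Qed.

Lemma in_cone_pair (J : finType) (A : J -> X -> R) (b : J -> R) p q (al be : R) :
  0 <= al -> 0 <= be ->
  in_cone A b (fun i => al * A p i + be * A q i) (al * b p + be * b q).
Proof.
move=> al0 be0; exists (fun k => (k == p)%:R * al + (k == q)%:R * be); split.
- by move=> k; rewrite addr_ge0 // mulr_ge0 ?ler0n.
- by move=> i; under eq_bigr do rewrite mulrDl -!mulrA;
    rewrite big_split /= !sum_kronecker.
- by under eq_bigr do rewrite mulrDl -!mulrA; rewrite big_split /= !sum_kronecker.
Qed.

Lemma in_cone_row (J : finType) (A : J -> X -> R) (b : J -> R) j : in_cone A b (A j) (b j).
Proof.
by exists (fun k => (k == j)%:R); split=> [k|i|]; rewrite ?ler0n ?sum_kronecker.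
Qed.

Lemma in_cone_comb (J J' : finType) (A : J -> X -> R) (b : J -> R)
    (A' : J' -> X -> R) (b' : J' -> R) (mu : J' -> R) :
  (forall k, in_cone A b (A' k) (b' k)) -> (forall k, 0 <= mu k) ->
  in_cone A b (fun i => \sum_k mu k * A' k i) (\sum_k mu k * b' k).
Proof.
move=> cone_k mu_ge0; have [lam lamP] := fin_all_exists cone_k.
have sum_swap (f : J -> R) :
    \sum_j (\sum_k mu k * lam k j) * f j = \sum_k mu k * \sum_j lam k j * f j.
  under eq_bigr do rewrite mulr_suml.
  by rewrite exchange_big; apply: eq_bigr => k _; rewrite mulr_sumr;
    apply: eq_bigr => j _; rewrite mulrA.
exists (fun j => \sum_k mu k * lam k j); split.
- by move=> j; apply: sumr_ge0 => k _; rewrite mulr_ge0 //; case: (lamP k).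
- move=> i; rewrite sum_swap; apply: eq_bigr => k _; by case: (lamP k) => _ ->.
- rewrite sum_swap; apply: eq_bigr => k _; by case: (lamP k) => _ _ ->.
Qed.

Lemma fm_interval (J : finType) (a r : J -> R) :
  (forall j, a j = 0 -> 0 <= r j) ->
  (forall p q, 0 < a p -> a q < 0 -> 0 <= - a q * r p + a p * r q) ->
  exists t, forall j, 0 <= a j * t + r j.
Proof.
move=> zero_ok pair_ok.
have [p0 ap0|no_pos] := pickP (fun p => 0 < a p).
  pose low p := - r p / a p.
  have [ps aps low_max] := @arg_maxP _ _ _ p0 (fun p => 0 < a p) low ap0.
  exists (low ps) => j; case: (ltrgtP (a j) 0) => [aj_lt0|aj_gt0|aj0].
  - have -> : a j * low ps + r j = (- a j * r ps + a ps * r j) / a ps.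
      by rewrite /low; field; rewrite gt_eqF.
    by rewrite divr_ge0 ?pair_ok // ltW.
  - have := ler_wpM2l (ltW aj_gt0) (low_max j aj_gt0).
    have -> : a j * low j = - r j by rewrite /low; field; rewrite gt_eqF.
    lra.
  - by rewrite aj0 mul0r add0r zero_ok.
pose s := \sum_k `|r k| / `|a k|.
exists (- s) => j; case: (ltrgtP (a j) 0) => [aj_lt0|aj_gt0|aj0].
- have le_s : `|r j| / `|a j| <= s.
    by rewrite /s (bigD1 j) //= lerDl sumr_ge0 // => k _; rewrite divr_ge0.
  rewrite -lerN2 in le_s; have := ler_wnM2l (ltW aj_lt0) le_s.
  have -> : a j * - (`|r j| / `|a j|) = `|r j|.
    by rewrite (ltr0_norm aj_lt0); field; rewrite lt_eqF.
  have := ler_norm (- r j); rewrite normrN; lra.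
- by have := no_pos j; rewrite /= aj_gt0.
- by rewrite aj0 mul0r add0r zero_ok.
Qed.

Section Elimination.
Variables (J : finType) (A : J -> X -> R) (b : J -> R) (v : X).

(* Fourier-Motzkin elimination of the variable [v]: the new system has one row
   for every pair of rows with a positive and a negative coefficient at [v], and
   keeps the rows whose coefficient at [v] vanishes. *)
Definition fm_index : finType :=
  ({pq : J * J | (0 < A pq.1 v) && (A pq.2 v < 0)} + {j : J | A j v == 0})%type.

Definition fm_row (k : fm_index) (i : X) : R :=
  match k with
  | inl pq => - A (val pq).2 v * A (val pq).1 i + A (val pq).1 v * A (val pq).2 i
  | inr j => A (val j) i
  end.

Definition fm_rhs (k : fm_index) : R :=
  match k with
  | inl pq => - A (val pq).2 v * b (val pq).1 + A (val pq).1 v * b (val pq).2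
  | inr j => b (val j)
  end.

Lemma fm_row_v k : fm_row k v = 0.
Proof. by case: k => [[[p q] _]|[j /eqP]] //=; rewrite mulNr mulrC addNr. Qed.

Lemma fm_row_in_cone k : in_cone A b (fm_row k) (fm_rhs k).
Proof.
case: k => [[[p q] pq]|j]; last exact: in_cone_row.
have /andP[Ap Aq] := pq; by apply: in_cone_pair; rewrite ?oppr_ge0 ltW.
Qed.

Lemma fm_lift (S : {set X}) (x : X -> R) : v \in S ->
  (forall k, 0 <= affine_val (S :\ v) fm_row fm_rhs k x) ->
  exists t, forall j, 0 <= affine_val S A b j (fun i => if i == v then t else x i).
Proof.
move=> vS fm_ok; pose r j := affine_val (S :\ v) A b j x.
have [|p q Ap Aq|t tP] := fm_interval (a := fun j => A j v) (r := r).
- by move=> j /eqP Aj; have := fm_ok (inr (exist _ j Aj)).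
- have := fm_ok (inl (exist _ (p, q) (introT andP (conj Ap Aq)))).
  rewrite /affine_val /r /=; set s := fun j => \sum_(i in S :\ v) A j i * x i.
  suff -> : \sum_(i in S :\ v) (- A q v * A p i + A p v * A q i) * x i =
      - A q v * s p + A p v * s q by rewrite /s !mulrDr; lra.
  by rewrite /s !mulr_sumr -big_split; apply: eq_bigr => i _; rewrite mulrDl !mulrA.
- exists t => j; have := tP j; congr (0 <= _).
  rewrite /r /affine_val (big_setD1 v vS) /= eqxx -addrA; congr (_ + (_ + _)).
  by apply: eq_bigr => i; rewrite in_setD1 => /andP[/negbTE ->].
Qed.

End Elimination.

Arguments fm_row {J} A v k i.
Arguments fm_rhs {J} A b v k.

Lemma affine_combination (J : finType) (S : {set X}) (A : J -> X -> R) (b : J -> R)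
    (lam : J -> R) (x : X -> R) :
  (forall i, i \in S -> \sum_j lam j * A j i = 0) ->
  \sum_j lam j * affine_val S A b j x = \sum_j lam j * b j.
Proof.
move=> lam_col; under eq_bigr do rewrite mulrDr; rewrite big_split /=.
under eq_bigr do rewrite mulr_sumr; rewrite exchange_big /= big1 ?add0r // => i iS.
by under eq_bigr do rewrite mulrA; rewrite -mulr_suml lam_col // mul0r.
Qed.

Theorem farkas (J : finType) (S : {set X}) (A : J -> X -> R) (b : J -> R) :
  (forall x, exists j, affine_val S A b j x < 0) ->
  exists lam : J -> R, [/\ forall j, 0 <= lam j,
    forall i, i \in S -> \sum_j lam j * A j i = 0 & \sum_j lam j * b j < 0].
Proof.
have [n cardS] : exists n, #|S| = n by exists #|S|.
elim: n J S A b cardS => [|n IH] J S A b.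
  move/eqP; rewrite cards_eq0 => /eqP -> infeasible.
  have [j] := infeasible (fun _ => 0); rewrite /affine_val big_set0 add0r => bj.
  by exists (fun k => (k == j)%:R); split=> [k|i|]; rewrite ?ler0n ?in_set0 ?sum_kronecker.
move=> cardS infeasible; have [v vS] : exists v, v \in S by apply/card_gt0P; rewrite cardS.
have fm_infeasible x : exists k, affine_val (S :\ v) (fm_row A v) (fm_rhs A b v) k x < 0.
  case: (pickP (fun k => affine_val (S :\ v) (fm_row A v) (fm_rhs A b v) k x < 0)) => [k|fm_ok].
    by exists k.
  have fm_sol k : 0 <= affine_val (S :\ v) (fm_row A v) (fm_rhs A b v) k x.
    by rewrite leNgt fm_ok.
  have [t tP] := fm_lift vS fm_sol.
  by have [j] := infeasible (fun i => if i == v then t else x i); rewrite ltNge tP.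
have cardSv : #|S :\ v| = n by move: cardS; rewrite (cardsD1 v) vS add1n => -[].
have [lam' [lam'0 lam'S lam'b]] := IH _ _ _ _ cardSv fm_infeasible.
have [lam [lam0 lamA lamb]] := in_cone_comb (@fm_row_in_cone _ A b v) lam'0.
exists lam; split; rewrite ?lamb // => i iS; rewrite lamA.
case: (eqVneq i v) => [->|iv]; first by apply: big1 => k _; rewrite fm_row_v mulr0.
by apply: lam'S; rewrite in_setD1 iv.
Qed.

End Farkas.

(* The LP of the theorem is the instance [P = arcs I],
   [D = delta_in], [m = Mbig I]. *)
Section CoverLP.
Variables (R : realFieldType) (X K : finType).
Variables (P : {set X}) (D : K -> {set X}) (c : X -> R) (m : R) (Ut : {set K}).
Hypothesis D_sub : forall U, D U \subset P.

Definition cover_feasible (x : X -> R) : Prop :=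
  (forall U, U \in Ut -> 1 <= \sum_(a in D U) x a) /\
  (forall a, a \in P -> 0 <= x a <= 1).

Definition cover_obj (x : X -> R) : R := \sum_(a in P) c a * x a - m.

Definition cover_opt_value (L : R) : Prop :=
  (exists x, cover_feasible x /\ cover_obj x = L) /\
  (forall x, cover_feasible x -> L <= cover_obj x).

Definition cover_load (pi : K -> R) (a : X) : R := \sum_(U in Ut | a \in D U) pi U.

Definition cover_dual_feasible (pi : K -> R) (sigma : X -> R) : Prop :=
  (forall U, U \in Ut -> 0 <= pi U) /\
  (forall a, a \in P -> 0 <= sigma a /\ cover_load pi a - sigma a <= c a).

Definition cover_dual_obj (pi : K -> R) (sigma : X -> R) : R :=
  \sum_(U in Ut) pi U - \sum_(a in P) sigma a - m.

Definition cover_dual_optimal (pi : K -> R) : Prop :=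
  exists sigma, cover_dual_feasible pi sigma /\
    forall pi' sigma', cover_dual_feasible pi' sigma' ->
      cover_dual_obj pi' sigma' <= cover_dual_obj pi sigma.

Definition cover_red_cost (pi : K -> R) (a : X) : R := c a - cover_load pi a.

Lemma cover_load_exchange (pi : K -> R) (x : X -> R) :
  \sum_(a in P) cover_load pi a * x a = \sum_(U in Ut) pi U * \sum_(a in D U) x a.
Proof.
rewrite /cover_load; under eq_bigr do rewrite mulr_suml big_mkcondr.
rewrite exchange_big /=; apply: eq_bigr => U _; rewrite -big_mkcondr mulr_sumr /=.
apply: eq_bigl => a; rewrite andb_idl // => aDU; exact: subsetP (D_sub U) a aDU.
Qed.

Lemma cover_weak_duality (x : X -> R) (pi : K -> R) (sigma : X -> R) (F : {set X}) :
  cover_feasible x -> cover_dual_feasible pi sigma ->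
  F \subset P -> (forall a, a \in F -> x a = 1) ->
  \sum_(a in F) cover_red_cost pi a + cover_dual_obj pi sigma <= cover_obj x.
Proof.
move=> [x_cut x_box] [pi_ge0 dual_arc] FP xF.
have red_sigma_ge0 a : a \in P -> 0 <= cover_red_cost pi a + sigma a.
  by move=> aP; have [_] := dual_arc a aP; rewrite /cover_red_cost; lra.
have split_cost : \sum_(a in P) c a * x a =
    \sum_(a in P) (cover_red_cost pi a + sigma a) * x a - \sum_(a in P) sigma a * x a
    + \sum_(a in P) cover_load pi a * x a.
  rewrite -sumrB -big_split /=; apply: eq_bigr => a _.
  by rewrite /cover_red_cost; ring.
have cut_part : \sum_(U in Ut) pi U <= \sum_(a in P) cover_load pi a * x a.
  rewrite cover_load_exchange; apply: ler_sum => U UUt.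
  by rewrite -[leLHS]mulr1 ler_wpM2l ?pi_ge0 ?x_cut.
have sigma_part : \sum_(a in P) sigma a * x a <= \sum_(a in P) sigma a.
  apply: ler_sum => a aP; have [sigma_ge0 _] := dual_arc a aP.
  by rewrite -[leRHS]mulr1 ler_wpM2l //; case/andP: (x_box a aP).
have F_part : \sum_(a in F) cover_red_cost pi a <=
    \sum_(a in P) (cover_red_cost pi a + sigma a) * x a.
  rewrite [leRHS](big_setID F) /= (setIidPr FP).
  have -> : \sum_(a in F) (cover_red_cost pi a + sigma a) * x a =
      \sum_(a in F) cover_red_cost pi a + \sum_(a in F) sigma a.
    by rewrite -big_split; apply: eq_bigr => a aF; rewrite xF // mulr1.
  rewrite -addrA lerDl addr_ge0 ?sumr_ge0 // => a.
    by move=> aF; have [] := dual_arc a (subsetP FP a aF).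
  rewrite in_setD => /andP[_ aP]; rewrite mulr_ge0 ?red_sigma_ge0 //.
  by case/andP: (x_box a aP).
rewrite /cover_obj /cover_dual_obj split_cost; lra.
Qed.

Section StrongDuality.
Variable L : R.
Hypothesis L_opt : cover_opt_value L.

(* The system [cover_feasible x /\ cover_obj x <= L - eps] as affine inequalities
   [0 <= affine_val P cover_row (cover_rhs eps) j x]: one row per cut, two rows
   per arc for the bounds, and one row for the objective. *)
Definition cover_index : finType := ((K + (X + X)) + unit)%type.

Definition cover_row (j : cover_index) (i : X) : R :=
  match j with
  | inl (inl U) => ((U \in Ut) && (i \in D U))%:R
  | inl (inr (inl a)) => (i == a)%:R
  | inl (inr (inr a)) => - (i == a)%:R
  | inr _ => - c i
  end.

Definition cover_rhs (eps : R) (j : cover_index) : R :=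
  match j with
  | inl (inl U) => - (U \in Ut)%:R
  | inl (inr (inl a)) => 0
  | inl (inr (inr a)) => 1
  | inr _ => L + m - eps
  end.

Lemma sum_kronecker_in (a : X) (f : X -> R) :
  \sum_(i in P) (i == a)%:R * f i = (a \in P)%:R * f a.
Proof.
rewrite big_mkcond /= (bigD1 a) //= eqxx mul1r big1 ?addr0 => [|i /negbTE ->].
  by case: (a \in P); rewrite ?mul1r ?mul0r.
by rewrite mul0r if_same.
Qed.

Lemma cover_row_val eps j x :
  affine_val P cover_row (cover_rhs eps) j x =
  match j with
  | inl (inl U) => (U \in Ut)%:R * (\sum_(a in D U) x a - 1)
  | inl (inr (inl a)) => (a \in P)%:R * x a
  | inl (inr (inr a)) => 1 - (a \in P)%:R * x a
  | inr _ => L - eps - cover_obj x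
  end.
Proof.
rewrite /affine_val; case: j => [[U|[a|a]]|_] /=.
- case: (U \in Ut); rewrite /= ?mul1r ?mul0r; last first.
    by rewrite big1 ?add0r ?oppr0 // => i _; rewrite mul0r.
  congr (_ - _); rewrite (big_setID (D U)) /= (setIidPr (D_sub U)).
  rewrite [X in _ + X]big1 ?addr0 => [|i]; last first.
    by rewrite in_setD => /andP[/negbTE ->]; rewrite mul0r.
  by apply: eq_bigr => i ->; rewrite mul1r.
- by rewrite addr0 sum_kronecker_in.
- by under eq_bigr do rewrite mulNr; rewrite sumrN sum_kronecker_in addrC.
- rewrite /cover_obj; under eq_bigr do rewrite mulNr; rewrite sumrN; lra.
Qed.

Definition lam_cut (lam : cover_index -> R) U := lam (inl (inl U)).
Definition lam_low (lam : cover_index -> R) a := lam (inl (inr (inl a))).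
Definition lam_up (lam : cover_index -> R) a := lam (inl (inr (inr a))).
Definition lam_obj (lam : cover_index -> R) := lam (inr tt).

Lemma sum_cover_index (F : cover_index -> R) :
  \sum_j F j = \sum_U F (inl (inl U)) + \sum_a F (inl (inr (inl a)))
    + \sum_a F (inl (inr (inr a))) + F (inr tt).
Proof. by rewrite !big_sumType /= (big_pred1 tt) ?addrA // => -[]. Qed.

Lemma cover_column (lam : cover_index -> R) a :
  \sum_j lam j * cover_row j a = \sum_(U in Ut | a \in D U) lam_cut lam U
    + lam_low lam a - lam_up lam a - lam_obj lam * c a.
Proof.
rewrite sum_cover_index /= mulrN; congr (_ + _ + _ - _).
- rewrite [RHS]big_mkcond /=; apply: eq_bigr => U _.
  by case: (U \in Ut) (a \in D U) => -[]; rewrite ?mulr1 ?mulr0.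
- rewrite (bigD1 a) //= eqxx mulr1 big1 ?addr0 // => i /negbTE.
  by rewrite eq_sym => ->; rewrite mulr0.
- rewrite (bigD1 a) //= eqxx mulr1n mulrN1 big1 ?addr0 // => i /negbTE.
  by rewrite eq_sym => ->; rewrite mulr0n oppr0 mulr0.
Qed.

Lemma cover_constant (lam : cover_index -> R) eps :
  \sum_j lam j * cover_rhs eps j = - \sum_(U in Ut) lam_cut lam U
    + \sum_a lam_up lam a + lam_obj lam * (L + m - eps).
Proof.
rewrite sum_cover_index /= [X in _ + X + _ + _]big1 ?addr0 => [|a _]; last by rewrite mulr0.
congr (_ + _ + _); last by under eq_bigr do rewrite mulr1.
rewrite -sumrN [RHS]big_mkcond /=; apply: eq_bigr => U _.
by case: (U \in Ut); rewrite /= ?mulr1n ?mulr0n ?mulrN1 ?oppr0 ?mulr0.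
Qed.

Lemma cover_rows_feasible eps x j : cover_feasible x -> j != inr tt ->
  0 <= affine_val P cover_row (cover_rhs eps) j x.
Proof.
move=> [x_cut x_box]; rewrite cover_row_val; case: j => [[U|[a|a]]|[]] //= _.
- by case: (boolP (U \in Ut)) => UUt; rewrite ?mul0r // mul1r subr_ge0 x_cut.
- by case: (boolP (a \in P)) => aP; rewrite ?mul0r // mul1r; case/andP: (x_box a aP).
- case: (boolP (a \in P)) => aP; rewrite ?mul0r ?subr0 // mul1r subr_ge0.
  by case/andP: (x_box a aP).
Qed.

(* Since [L] is optimal, no feasible point has value at most [L - eps]. *)
Lemma cover_system_infeasible eps : 0 < eps ->
  forall x, exists j, affine_val P cover_row (cover_rhs eps) j x < 0.
Proof.
move=> eps_gt0 x; pose row_val j := affine_val P cover_row (cover_rhs eps) j x.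
case: (pickP (fun j => row_val j < 0)) => [j|rows_ok]; first by exists j.
have row_ge0 j : 0 <= row_val j by rewrite leNgt rows_ok.
have x_feas : cover_feasible x.
  split=> [U UUt|a aP].
    by have := row_ge0 (inl (inl U)); rewrite /row_val cover_row_val UUt mul1r subr_ge0.
  have := row_ge0 (inl (inr (inl a))); have := row_ge0 (inl (inr (inr a))).
  by rewrite /row_val !cover_row_val aP mul1r subr_ge0 => -> ->.
have := L_opt.2 x x_feas; have := row_ge0 (inr tt); rewrite /row_val cover_row_val; lra.
Qed.

(* The Farkas certificate of this infeasibility puts a positive weight on the
   objective row: otherwise it would be refuted by an optimal solution. *)
Lemma cover_certificate eps : 0 < eps ->
  exists lam : cover_index -> R, [/\ forall j, 0 <= lam j,
    forall a, a \in P -> \sum_j lam j * cover_row j a = 0,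
    \sum_j lam j * cover_rhs eps j < 0 & 0 < lam_obj lam].
Proof.
move=> eps_gt0; have [lam [lam_ge0 lam_col lam_const]] := farkas (cover_system_infeasible eps_gt0).
exists lam; split=> //; rewrite lt_def (lam_ge0 (inr tt)) andbT; apply/eqP => lam_obj0.
have [[x0 [x0_feas _]] _] := L_opt.
suff : 0 <= \sum_j lam j * affine_val P cover_row (cover_rhs eps) j x0.
  by rewrite affine_combination // leNgt lam_const.
apply: sumr_ge0 => j _; case: (eqVneq j (inr tt)) => [->|j_row].
  by rewrite [lam _]lam_obj0 mul0r.
by rewrite mulr_ge0 ?cover_rows_feasible.
Qed.

(* For every [eps > 0] some dual solution has value larger than [L - eps]: the
   certificate, scaled by its weight on the objective row. *)
Lemma cover_near_optimal_dual eps : 0 < eps ->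
  exists pi sigma, cover_dual_feasible pi sigma /\ L - eps < cover_dual_obj pi sigma.
Proof.
move=> eps_gt0; have [lam [lam_ge0 lam_col lam_const kap_gt0]] := cover_certificate eps_gt0.
pose kap := lam_obj lam; have kap_inv_ge0 : 0 <= kap^-1 by rewrite invr_ge0 ltW.
exists (fun U => lam_cut lam U / kap), (fun a => lam_up lam a / kap); split; first split.
- by move=> U _; rewrite mulr_ge0 ?lam_ge0.
- move=> a aP; split; first by rewrite mulr_ge0 ?lam_ge0.
  have := lam_col a aP; rewrite cover_column /cover_load -mulr_suml => col0.
  have low_ge0 : 0 <= lam_low lam a / kap by rewrite mulr_ge0 ?lam_ge0.
  suff -> : (\sum_(U in Ut | a \in D U) lam_cut lam U) / kap - lam_up lam a / kap
      = c a - lam_low lam a / kap by lra.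
  by apply: (mulIf (lt0r_neq0 kap_gt0)); rewrite !mulrBl !divfK ?lt0r_neq0 //; lra.
- have up_P : \sum_(a in P) lam_up lam a <= \sum_a lam_up lam a.
    by rewrite [leRHS](bigID (mem P)) /= lerDl sumr_ge0 // => a _; apply: lam_ge0.
  have := lam_const; rewrite cover_constant => const_lt0.
  rewrite /cover_dual_obj -!mulr_suml -mulrBl.
  have : L + m - eps < (\sum_(U in Ut) lam_cut lam U - \sum_(a in P) lam_up lam a) / kap.
    by rewrite ltr_pdivlMr // mulrC /kap; lra.
  lra.
Qed.

Lemma cover_dual_ge pi sigma :
  (forall pi' sigma', cover_dual_feasible pi' sigma' ->
     cover_dual_obj pi' sigma' <= cover_dual_obj pi sigma) ->
  L <= cover_dual_obj pi sigma.
Proof.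
move=> dual_max; rewrite leNgt; apply/negP => dual_lt.
have eps_gt0 : 0 < (L - cover_dual_obj pi sigma) / 2 by rewrite divr_gt0 // subr_gt0.
have [pi' [sigma' [feas' value']]] := cover_near_optimal_dual eps_gt0.
have := dual_max _ _ feas'; lra.
Qed.

Theorem cover_reduced_cost_bound pi x (F : {set X}) :
  cover_dual_optimal pi -> cover_feasible x ->
  F \subset P -> (forall a, a \in F -> x a = 1) ->
  \sum_(a in F) cover_red_cost pi a + L <= cover_obj x.
Proof.
move=> [sigma [dual_feas dual_max]] x_feas FP xF.
have := cover_weak_duality x_feas dual_feas FP xF.
have := cover_dual_ge dual_max; lra.
Qed.

End StrongDuality.

End CoverLP.

Section Distance.
Variables (T : finType) (e : rel T) (r : T).

Definition reached_in (v : T) (n : nat) : bool :=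
  ~~ connect e r v || [exists p : n.-tuple T, path e r p && (last r p == v)].

Lemma reached_in_exists v : exists n, reached_in v n.
Proof.
case: (boolP (connect e r v)) => [/connectP[p p_path p_last]|not_r_v].
  exists (size p); apply/orP; right; apply/existsP; exists (in_tuple p).
  by rewrite /= p_path -p_last eqxx.
by exists 0%N; rewrite /reached_in not_r_v.
Qed.

Definition dist (v : T) : nat := ex_minn (reached_in_exists v).

Lemma dist_le v (p : seq T) : path e r p -> last r p = v -> (dist v <= size p)%N.
Proof.
move=> p_path p_last; rewrite /dist; case: ex_minnP => n _; apply.
by apply/orP; right; apply/existsP; exists (in_tuple p); rewrite /= p_path p_last eqxx.
Qed.

Lemma dist_root : dist r = 0%N.
Proof. by apply/eqP; rewrite -leqn0 (@dist_le r [::]). Qed.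

Lemma shortest_path v : connect e r v ->
  exists2 p, path e r p & last r p = v /\ size p = dist v.
Proof.
move=> r_v; rewrite /dist; case: ex_minnP => n + _.
rewrite /reached_in r_v => /existsP[p /andP[p_path /eqP p_last]].
by exists p; rewrite ?size_tuple.
Qed.

Lemma dist_parent v : connect e r v -> v != r ->
  exists2 u, e u v & (dist u).+1 = dist v.
Proof.
move=> r_v v_r; have [p p_path [p_last p_size]] := shortest_path r_v.
case/lastP: p p_path p_last p_size => [|p u]; first by move=> _ /= vr; rewrite vr eqxx in v_r.
rewrite rcons_path last_rcons size_rcons => /andP[p_path p_u] <- p_size.
exists (last r p) => //; apply/eqP; rewrite eqn_leq -p_size ltnS dist_le //=.
have [|q q_path [q_last q_size]] := shortest_path (v := last r p).
  by apply/connectP; exists p.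
by rewrite p_size -q_size -(size_rcons q u) dist_le // ?last_rcons // rcons_path q_path q_last.
Qed.

End Distance.

Lemma connect_enters (T : finType) (e : rel T) (U : {set T}) r z :
  r \notin U -> z \in U -> connect e r z ->
  exists a b, [&& e a b, a \notin U & b \in U].
Proof.
move=> rU zU /connectP[p + p_last]; elim: p r rU p_last => [|y p IH] r rU /=.
  by move=> zr; rewrite -zr zU in rU.
move=> p_last /andP[r_y y_path]; case: (boolP (y \in U)) => yU.
  by exists r, y; rewrite r_y rU yU.
exact: IH yU p_last y_path.
Qed.

Definition tree_rel (V : finType) (ES : {set V * V}) : rel V := fun u v => (u, v) \in ES.

Lemma sum_Tp (V : finType) (I : PCSTP V) (Q : pred V) (f : V -> rat) :
  \sum_(t : Tp I | Q (val t)) f (val t) = \sum_(v | (0 < pr I v) && Q v) f v.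
Proof.
rewrite [RHS](reindex_omap (val : Tp I -> V) insub) => [|v /andP[v_prize _]].
  by apply: eq_bigl => -[v v_prize] /=; rewrite insubT ?v_prize /= eqxx andbT.
by rewrite insubT.
Qed.

Section Arborescence.
Variables (V : finType) (I : PCSTP V) (VS : {set V}) (ES : {set V * V}).
Hypothesis tree : is_tree I VS ES.
Variable r0 : V.
Hypotheses (r0_VS : r0 \in VS) (r0_prize : 0 < pr I r0).
Variable par : V -> V.
Hypothesis par_spec : forall v, v \in VS -> v != r0 ->
  (par v, v) \in ES /\ (dist (tree_rel ES) r0 (par v)).+1 = dist (tree_rel ES) r0 v.

Local Notation d := (dist (tree_rel ES) r0).

Lemma tree_edge a : a \in ES -> [/\ adj I a.1 a.2, a.1 \in VS, a.2 \in VS & (a.2, a.1) \in ES].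
Proof. by case: tree => _ edges _ _; apply: edges. Qed.

(* Arcs of the arborescence of Transformation 1 built from the tree rooted at
   [r0]: the root arc [(r', r0)], the tree edges directed away from [r0], the
   arcs [(t, t')] for covered terminals, and the path [r0 -> v0' -> t'] for the
   uncovered ones. *)
Definition arb_arc (a b : V' I) : bool :=
  match a, b with
  | inr true, inl (inl t) => t == r0
  | inl (inl u), inl (inl v) => [&& v \in VS, v != r0 & u == par v]
  | inl (inl t), inr false => t == r0
  | inl (inl t), inl (inr t') => (t == val t') && (t \in VS)
  | inr false, inl (inr t') => val t' \notin VS
  | _, _ => false
  end.

Definition arb_x (a : V' I * V' I) : rat := (arb_arc a.1 a.2)%:R.

Definition arb_rel : rel (V' I) := fun a b => arcb a b && arb_arc a b.

Lemma arb_reaches_vertex v : v \in VS -> connect arb_rel (root' I) (orig I v).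
Proof.
have [n dv] : exists n, d v = n by exists (d v).
elim: n v dv => [|n IH] v dv vVS.
  case: (eqVneq v r0) => [->|vr0]; first by apply: connect1; rewrite /arb_rel /= r0_prize eqxx.
  by have [_] := par_spec vVS vr0; rewrite dv.
case: (eqVneq v r0) => [vr0|vr0]; first by rewrite vr0 dist_root in dv.
have [par_v dpar] := par_spec vVS vr0; have [adj_v par_VS _ _] := tree_edge par_v.
apply: connect_trans (IH (par v) _ par_VS) (connect1 _); first by move: dpar; rewrite dv => -[].
by rewrite /arb_rel /= adj_v vVS vr0 eqxx.
Qed.

Lemma arb_reaches_terminal (t : Tp I) : connect arb_rel (root' I) (tprime t).
Proof.
case: (boolP (val t \in VS)) => tVS.
  by apply: connect_trans (arb_reaches_vertex tVS) (connect1 _); rewrite /arb_rel /= eqxx tVS.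
apply: connect_trans (arb_reaches_vertex r0_VS) _.
by apply: (@connect_trans _ _ (v0' I)); apply: connect1; rewrite /arb_rel /= ?r0_prize ?eqxx ?tVS.
Qed.

Lemma arb_feasible (Ut : {set {set V' I}}) :
  (forall U, U \in Ut -> root' I \notin U /\ U :&: terminals' I != set0) ->
  lp_feasible Ut arb_x.
Proof.
move=> cuts; split=> [U UUt|a _]; last by rewrite /arb_x ler0n; case: arb_arc.
have [rU /set0Pn[z]] := cuts U UUt; rewrite in_setI /terminals' in_set => /andP[zU z_term].
have r_z : connect arb_rel (root' I) z.
  by case: z zU z_term => [[v|t]|[]] //= _ _; apply: arb_reaches_terminal.
have [a [b /and3P[/andP[ab_arc ab_arb] aU bU]]] := connect_enters rU zU r_z.
have ab_in : (a, b) \in delta_in U by rewrite /delta_in !in_set /= ab_arc aU bU.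
by rewrite (bigD1 (a, b)) //= /arb_x /= ab_arb lerDl sumr_ge0.
Qed.

Lemma arb_saturated (t : Tp I) : val t \notin VS -> arb_x (v0' I, tprime t) = 1.
Proof. by move=> tVS; rewrite /arb_x /= tVS. Qed.

Definition out_cost (a : V' I) : rat :=
  \sum_b (if arcb a b then cst' a b * (arb_arc a b)%:R else 0).

(* From an original vertex only tree edges are used ([(t, t')] and [(r0, v0')] are free). *)
Lemma out_cost_orig u : out_cost (orig I u) =
  \sum_v (if adj I u v then cst I u v * ([&& v \in VS, v != r0 & u == par v])%:R else 0).
Proof.
rewrite /out_cost !big_sumType /= big_bool /= [X in _ + X + _]big1 => [|t _].
  by rewrite mul0r if_same !addr0.
by rewrite mul0r if_same.
Qed.

Lemma out_cost_tprime (t : Tp I) : out_cost (tprime t) = 0.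
Proof. by apply: big1 => -[[]|[]]. Qed.

Lemma out_cost_root : out_cost (root' I) = Mbig I.
Proof.
rewrite /out_cost !big_sumType /= big_bool /= [X in _ + X + _]big1 // !addr0.
rewrite (bigD1 r0) //= r0_prize eqxx mulr1 big1 ?addr0 // => v /negbTE ->.
by rewrite mulr0 if_same.
Qed.

Lemma out_cost_v0 : out_cost (v0' I) = \sum_(t : Tp I | val t \notin VS) pr I (val t).
Proof.
rewrite /out_cost !big_sumType /= big_bool /= big1 // add0r addr0 [RHS]big_mkcond /=.
by apply: eq_bigr => t _; case: (val t \in VS); rewrite /= ?mulr0 ?mulr1.
Qed.

Lemma tree_arcs_cost : \sum_u out_cost (orig I u) = \sum_(v in VS | v != r0) cst I (par v) v.
Proof.
under eq_bigr do rewrite out_cost_orig; rewrite exchange_big [RHS]big_mkcond /=.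
apply: eq_bigr => v _; case: (boolP ((v \in VS) && (v != r0))) => [/andP[vVS vr0]|not_child].
  have [par_v _] := par_spec vVS vr0; have [adj_v _ _ _] := tree_edge par_v.
  rewrite (bigD1 (par v)) //= vVS vr0 eqxx adj_v mulr1 big1 ?addr0 // => u /negbTE ->.
  by rewrite andbF mulr0 if_same.
by apply: big1 => u _; move: not_child; case: (v \in VS); case: (v != r0); rewrite // mulr0 if_same.
Qed.

Lemma arb_cost : \sum_(a in arcs I) cst' a.1 a.2 * arb_x a =
  \sum_(v in VS | v != r0) cst I (par v) v + Mbig I
    + \sum_(t : Tp I | val t \notin VS) pr I (val t).
Proof.
have -> : \sum_(a in arcs I) cst' a.1 a.2 * arb_x a = \sum_a out_cost a.
  rewrite pair_bigA big_mkcond /=; apply: eq_bigr => -[a b] _; by rewrite /arcs in_set.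
rewrite !big_sumType big_bool /= tree_arcs_cost out_cost_root out_cost_v0 addrA.
have no_tprime_arcs : \sum_t out_cost (tprime t) = 0 by apply: big1 => t _; apply: out_cost_tprime.
by rewrite no_tprime_arcs addr0.
Qed.

(* The edges [(par v, v)] and their reversals are distinct arcs of the tree, so
   their cost is at most half of the total arc cost. *)
Lemma parent_cost_le (cst_sym : forall u v, cst I u v = cst I v u)
    (cst_pos : forall u v, adj I u v -> 0 < cst I u v) :
  \sum_(v in VS | v != r0) cst I (par v) v <= (\sum_(a in ES) cst I a.1 a.2) / 2%:R.
Proof.
set C := [set v in VS | v != r0].
have C_spec v : v \in C -> (par v, v) \in ES /\ (d (par v)).+1 = d v.
  by rewrite in_set => /andP[vVS vr0]; apply: par_spec.
set Down := [set (par v, v) | v in C]; set Up := [set (v, par v) | v in C].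
have sum_C : \sum_(v in VS | v != r0) cst I (par v) v = \sum_(v in C) cst I (par v) v.
  by apply: eq_bigl => v; rewrite in_set.
have sum_Down : \sum_(a in Down) cst I a.1 a.2 = \sum_(v in C) cst I (par v) v.
  by rewrite big_imset // => u v _ _ [].
have sum_Up : \sum_(a in Up) cst I a.1 a.2 = \sum_(v in C) cst I (par v) v.
  by rewrite big_imset => [|u v _ _ []//]; apply: eq_bigr => v _; rewrite cst_sym.
have Down_ES : Down \subset ES by apply/subsetP => _ /imsetP[v vC ->]; case: (C_spec v vC).
have Up_ES : Up \subset ES :\: Down.
  apply/subsetP => _ /imsetP[v vC ->]; rewrite in_setD.
  have [par_v dv] := C_spec v vC; have [_ _ _ ->] := tree_edge par_v; rewrite andbT.
  apply/imsetP => -[w wC [vw par_w]]; have [_ dw] := C_spec w wC.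
  by move: dv dw; rewrite -vw par_w; lia.
have cost_ge0 (A : {set V * V}) : A \subset ES -> 0 <= \sum_(a in A) cst I a.1 a.2.
  move=> AES; apply: sumr_ge0 => a aA; have [adj_a _ _ _] := tree_edge (subsetP AES a aA).
  exact: ltW (cst_pos _ _ adj_a).
have rest_ge0 := cost_ge0 _ (subset_trans (subsetDl (ES :\: Down) Up) (subsetDl ES Down)).
rewrite (big_setID (A := ES) Down) /= (setIidPr Down_ES).
rewrite (big_setID (A := ES :\: Down) Up) /= (setIidPr Up_ES).
rewrite sum_Down sum_Up sum_C ler_pdivlMr ?ltr0n //; lra.
Qed.

Lemma arb_obj_le (cst_sym : forall u v, cst I u v = cst I v u)
    (cst_pos : forall u v, adj I u v -> 0 < cst I u v) (prize_ge0 : forall v, 0 <= pr I v) :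
  lp_obj arb_x <= tree_cost I VS ES.
Proof.
rewrite /lp_obj arb_cost /tree_cost.
have := parent_cost_le cst_sym cst_pos.
have : \sum_(t : Tp I | val t \notin VS) pr I (val t) <= \sum_(v in ~: VS) pr I v.
  rewrite (@sum_Tp _ I (fun v => v \notin VS)) [leRHS]big_mkcond [leLHS]big_mkcond /=.
  by apply: ler_sum => v _; rewrite in_setC; case: (_ < _); case: (_ \in VS); rewrite /= ?prize_ge0.
lra.
Qed.

End Arborescence.

Lemma tree_lp_solution (V : finType) (I : PCSTP V) (wf : pcstp_wf I)
    (VS : {set V}) (ES : {set V * V}) (tree : is_tree I VS ES)
    (r0 : V) (r0_VS : r0 \in VS) (r0_prize : 0 < pr I r0) (Ut : {set {set V' I}}) :
  (forall U, U \in Ut -> root' I \notin U /\ U :&: terminals' I != set0) ->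
  exists x, [/\ lp_feasible Ut x,
    forall t : Tp I, val t \notin VS -> x (v0' I, tprime t) = 1 &
    lp_obj x <= tree_cost I VS ES].
Proof.
move=> cuts; have [[_ _ cst_sym cst_pos prize_ge0] _] := wf.
have parent v : exists u, v \in VS -> v != r0 ->
    (u, v) \in ES /\ (dist (tree_rel ES) r0 u).+1 = dist (tree_rel ES) r0 v.
  case: (boolP ((v \in VS) && (v != r0))) => [/andP[vVS vr0]|not_child].
    have [|u] := @dist_parent _ (tree_rel ES) r0 v _ vr0; last by exists u.
    by case: tree => _ _ connected _; apply: connected.
  by exists v => vVS vr0; rewrite vVS vr0 in not_child.
have [par par_spec] := fin_all_exists parent.
exists (arb_x VS r0 par); split.
- exact: (arb_feasible tree r0_VS r0_prize par_spec cuts).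
- exact: arb_saturated.
- exact: (arb_obj_le tree r0_VS r0_prize par_spec cst_sym cst_pos prize_ge0).
Qed.

Lemma singleton_tree (V : finType) (I : PCSTP V) (t : V) : is_tree I [set t] set0.
Proof.
split=> [|a|u v /set1P-> /set1P->|[[|x [|y s]] [_ size_s cycle_s]]] //.
- by apply/set0Pn; exists t; rewrite in_set1.
- by rewrite in_set0.
- by move: cycle_s; rewrite /= in_set0.
Qed.

(* If some vertex has positive prize, every optimal tree contains one: otherwise
   it would pay all prizes, more than the single vertex of positive prize. *)
Lemma optimal_tree_has_prize (V : finType) (I : PCSTP V) (wf : pcstp_wf I)
    (VS : {set V}) (ES : {set V * V}) (t : V) :
  is_optimal I VS ES -> 0 < pr I t -> exists2 r, r \in VS & 0 < pr I r.
Proof.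
move=> [tree opt] t_prize; have [[_ _ _ cst_pos prize_ge0] _] := wf.
have [r /andP[rVS r_prize]|no_prize] := pickP (fun r => (r \in VS) && (0 < pr I r)).
  by exists r.
have := opt _ _ (singleton_tree I t); rewrite /tree_cost big_set0 mul0r add0r.
have edges_ge0 : 0 <= (\sum_(a in ES) cst I a.1 a.2) / 2%:R.
  rewrite divr_ge0 // sumr_ge0 // => a aES; have [_ edges _ _] := tree.
  by have [adj_a _ _ _] := edges a aES; rewrite ltW ?cst_pos.
have pays_all : \sum_(v in ~: VS) pr I v = \sum_v pr I v.
  rewrite [RHS](bigID (mem VS)) /= [X in _ = X + _]big1 ?add0r => [|v vVS].
    by apply: eq_bigl => v; rewrite in_setC.
  apply/eqP; rewrite eq_le prize_ge0 andbT leNgt; apply/negP => v_prize.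
  by have := no_prize v; rewrite /= vVS v_prize.
have pays_but_t : \sum_(v in ~: [set t]) pr I v = \sum_v pr I v - pr I t.
  rewrite [X in _ = X - _](bigD1 t) //= [pr I t + _]addrC addrK.
  by apply: eq_bigl => v; rewrite in_setC in_set1.
rewrite pays_all pays_but_t; lra.
Qed.

Unset Implicit Arguments.
Set Strict Implicit.

Theorem proposition6 (V : finType) (I : PCSTP V) (Hwf : pcstp_wf I)
    (Ut : {set {set V' I}})
    (HUt : forall U, U \in Ut -> root' I \notin U /\ U :&: terminals' I != set0)
    (L : rat) (HL : lp_opt_value Ut L)
    (pi : {set V' I} -> rat) (Hpi : dual_optimal_pi Ut pi)
    (B : rat) (HB : forall VS ES, is_optimal I VS ES -> tree_cost I VS ES <= B)
    (ti : V) (Hti : 0 < pr I ti)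
    (Tbar : {set V}) (HTbar : forall t, t \in Tbar -> 0 < pr I t)
    (Himpl : forall VS ES, is_optimal I VS ES -> VS :&: Tbar != set0 -> ti \in VS)
    (Hgt : \sum_(tj : Tp I | val tj \in Tbar) red_cost Ut pi (v0' I, tprime tj) + L > B) :
  forall VS ES, is_optimal I VS ES -> ti \in VS.
Proof.
move=> VS ES opt; apply/negPn/negP => ti_out.
have Tbar_out t : t \in Tbar -> t \notin VS.
  move=> tTbar; apply: contra ti_out => tVS; apply: Himpl opt _.
  by apply/set0Pn; exists t; rewrite in_setI tVS.
have [r0 r0_VS r0_prize] := optimal_tree_has_prize Hwf opt Hti.
have [x [x_feas x_sat x_cost]] := tree_lp_solution Hwf opt.1 r0_VS r0_prize HUt.
pose F := [set (v0' I, tprime t) | t in [set t : Tp I | val t \in Tbar]].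
have F_arcs : F \subset arcs I by apply/subsetP => _ /imsetP[t _ ->]; rewrite in_set.
have F_sat a : a \in F -> x a = 1.
  by case/imsetP=> t; rewrite in_set => tTbar ->; apply/x_sat/Tbar_out.
have red_F : \sum_(a in F) red_cost Ut pi a =
    \sum_(tj : Tp I | val tj \in Tbar) red_cost Ut pi (v0' I, tprime tj).
  by rewrite big_imset => [|t1 t2 _ _ [->]] //; apply: eq_bigl => t; rewrite in_set.
have delta_arcs U : delta_in U \subset arcs I by apply/subsetP => a; rewrite in_set => /andP[].
have := cover_reduced_cost_bound delta_arcs HL Hpi x_feas F_arcs F_sat.
have := HB VS ES opt; rewrite -[cover_obj _ _ _ x]/(lp_obj x) red_F; lra.
Qed.
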